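(* For every $m \ge 1$, the quotient $TW_{m+2}'/TW_{m+2}''$ is isomorphic to the free abelian group $\mathbb Z^{2m-1}$. In particular, $TW_{m+2}'$ is not perfect for any $m \ge 1$.
   Context: For $n \ge 2$, the twin group $TW_n$ is the group with generators $\tau_1,\dots,\tau_{n-1}$ and defining relations $\tau_i^2=1$ for all $i$, and $\tau_i\tau_j=\tau_j\tau_i$ whenever $|i-j|>1$. $G'$ denotes the commutator subgroup of a group $G$ and $G''=(G')'$. *)

(* The twin group TW_n is modelled by its presentation:
   elements are words in the generators tau_1..tau_{n-1} (letter i : 'I_(n-1)
   stands for tau_{i+1}), modulo the congruence generated by the defining
   relations. Since every generator is an involution, the free monoid on the
   generators modulo this congruence is exactly the group TW_n, and the
   inverse of a word is its reverse. *)
From HB Require Import structures.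
From mathcomp Require Import all_boot all_order all_algebra.
Set Implicit Arguments. Unset Strict Implicit. Unset Printing Implicit Defensive.
Import GRing.Theory.
Local Open Scope ring_scope.

Definition tw_word (n : nat) := seq 'I_n.-1.

Definition far (k : nat) (i j : 'I_k) : bool :=
  ((nat_of_ord i).+1 < j)%N || ((nat_of_ord j).+1 < i)%N.

Inductive tw_eq (n : nat) : tw_word n -> tw_word n -> Prop :=
| tw_refl u : tw_eq u u
| tw_sym u v : tw_eq u v -> tw_eq v u
| tw_trans u v w : tw_eq u v -> tw_eq v w -> tw_eq u w
| tw_sq (u v : tw_word n) (i : 'I_n.-1) : tw_eq (u ++ [:: i; i] ++ v) (u ++ v)
| tw_comm (u v : tw_word n) (i j : 'I_n.-1) :
    far i j -> tw_eq (u ++ [:: i; j] ++ v) (u ++ [:: j; i] ++ v).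

Definition tw_inv (n : nat) (u : tw_word n) : tw_word n := rev u.
Definition tw_commutator (n : nat) (a b : tw_word n) : tw_word n :=
  tw_inv a ++ tw_inv b ++ a ++ b.

Inductive tw_derived (n : nat) (H : tw_word n -> Prop) : tw_word n -> Prop :=
| der_gen a b : H a -> H b -> tw_derived H (tw_commutator a b)
| der_one : tw_derived H [::]
| der_mul u v : tw_derived H u -> tw_derived H v -> tw_derived H (u ++ v)
| der_inv u : tw_derived H u -> tw_derived H (tw_inv u)
| der_eq u v : tw_derived H u -> tw_eq u v -> tw_derived H v.

Definition TW' (n : nat) : tw_word n -> Prop := tw_derived (fun _ => True).
Definition TW'' (n : nat) : tw_word n -> Prop := tw_derived (@TW' n).

(* TW_n'/TW_n'' is isomorphic to Z^k: there is a homomorphism f from TW_n'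
   (well defined on group elements) onto Z^k (row vectors of integers) whose
   kernel is exactly TW_n''. *)
Definition TW_ab_iso_Zk (n k : nat) : Prop :=
  exists f : tw_word n -> 'rV[int]_k,
    [/\ (forall u v, TW' u -> tw_eq u v -> f u = f v),
        (forall u v, TW' u -> TW' v -> f (u ++ v) = f u + f v),
        (forall x : 'rV[int]_k, exists2 u, TW' u & f u = x)
      & (forall u, TW' u -> (f u = 0 <-> TW'' u))].

Definition TW'_perfect (n : nat) : Prop := forall u : tw_word n, TW' u -> TW'' u.

(* Write a_i for the letter i of TW_(p+2), i.e. the generator tau_(i+1).
   TW' is the kernel of the abelianisation onto (Z/2)^(p+1): the words in which
   every letter occurs an even number of times. It contains the 2p-1 words
   x_c = (a_c a_(c+1))^2 for c < p and y_k = a_(k-1) (a_k a_(k+1))^2 a_(k-1)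
   for 0 < k < p.
   Reidemeister-Schreier with the transversal of increasing words shows that
   they generate TW' modulo TW'': each Schreier generator is a conjugate of
   1 or of some x_c, and the conjugate of a generator by a letter is a product
   of generators (a finite table of relations, each checked by free
   cancellation); moreover a product of generators whose exponent sums all
   vanish lies in TW''. Conversely, an explicit Z^(2p-1)-valued cocycle for
   the parity action of words is invariant under the relations; on TW', which
   acts trivially, it is a homomorphism that kills TW'' and sends the
   generators to the standard basis. *)

From mathcomp Require Import all_boot all_order all_algebra.
From mathcomp Require Import zify ring.
From Stdlib Require Import FunctionalExtensionality.
Set Implicit Arguments. Unset Strict Implicit. Unset Printing Implicit Defensive.
Import GRing.Theory.

Section WordCongruence.
Variable n : nat.
Implicit Types u v w z : tw_word n.

Lemma tw_congr a b u v : tw_eq u v -> tw_eq (a ++ u ++ b) (a ++ v ++ b).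
Proof.
elim=> {u v} [u | u v _ | u v w _ uv _ vw | u v i | u v i j far_ij].
- exact: tw_refl.
- exact: tw_sym.
- exact: tw_trans uv vw.
- by have := tw_sq (a ++ u) (v ++ b) i; rewrite -!catA.
- by have := tw_comm (a ++ u) (v ++ b) far_ij; rewrite -!catA.
Qed.

Lemma tw_congrL a u v : tw_eq u v -> tw_eq (a ++ u) (a ++ v).
Proof. by move=> /(tw_congr a [::]); rewrite !cats0. Qed.

Lemma tw_congrR b u v : tw_eq u v -> tw_eq (u ++ b) (v ++ b).
Proof. by move=> uv; have := tw_congr [::] b uv. Qed.

Lemma tw_cat u u' v v' : tw_eq u u' -> tw_eq v v' -> tw_eq (u ++ v) (u' ++ v').
Proof. by move=> /(tw_congrR v) uu' /(tw_congrL u') vv'; apply: tw_trans vv'. Qed.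

Lemma tw_eq_of_eq u v : u = v -> tw_eq u v.
Proof. by move=> ->; apply: tw_refl. Qed.

Lemma tw_catrev u : tw_eq (u ++ rev u) [::].
Proof.
elim: u => [|a u IH] /=; first exact: tw_refl.
rewrite rev_cons -cats1; apply: tw_trans (tw_sq [::] [::] a).
by have := tw_congr [:: a] [:: a] IH; rewrite /= -!catA.
Qed.

Lemma tw_revcat u : tw_eq (rev u ++ u) [::].
Proof. by have := tw_catrev (rev u); rewrite revK. Qed.

Lemma tw_rev u v : tw_eq u v -> tw_eq (rev u) (rev v).
Proof.
elim=> {u v} [u | u v _ | u v w _ uv _ vw | u v i | u v i j far_ij].
- exact: tw_refl.
- exact: tw_sym.
- exact: tw_trans uv vw.
- by rewrite !rev_cat /= -catA; apply: tw_sq.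
- by rewrite !rev_cat /= -!catA; apply: tw_comm; rewrite /far orbC.
Qed.

Lemma tw_commute_letter w (i : 'I_n.-1) :
  all (fun a => far a i) w -> tw_eq (w ++ [:: i]) (i :: w).
Proof.
elim: w => [|a w IH] /=; first by move=> _; apply: tw_refl.
case/andP=> far_ai /IH /(tw_congrL [:: a]) /= IHw.
exact: tw_trans IHw (tw_comm [::] w far_ai).
Qed.

Lemma tw_commute w z :
  all (fun i => all (fun a => far a i) w) z -> tw_eq (w ++ z) (z ++ w).
Proof.
elim: z => [|i z IH] /=; first by rewrite cats0 => _; apply: tw_refl.
case/andP=> /tw_commute_letter /(tw_congrR z) far_i /IH /(tw_congrL [:: i]) IHz.
by rewrite -cat1s catA; apply: tw_trans far_i IHz.
Qed.

Lemma tw_conj_far w z :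
  all (fun i => all (fun a => far a i) w) z -> tw_eq (w ++ z ++ rev w) z.
Proof.
move=> /tw_commute /(tw_congrR (rev w)); rewrite -!catA => wz.
by apply: tw_trans wz _; have := tw_congrL z (tw_catrev w); rewrite cats0.
Qed.

End WordCongruence.

(** * A cocycle for the parity action of words *)

Definition state := nat -> bool.
Definition state0 : state := fun=> false.
Definition toggle (q : state) (i : nat) : state := fun j => q j (+) (j == i).
Definition run k (q : state) (u : seq 'I_k) : state :=
  foldl (fun q (a : 'I_k) => toggle q a) q u.

Definition far_nat (a b : nat) := (a.+1 < b)%N || (b.+1 < a)%N.

Local Open Scope ring_scope.

(* The coordinates [c < p] of [cocycle p] are dual to the generators [x_c]
   and the coordinates [k + p - 1] to the generators [y_k]. *)
Definition weight (p : nat) (q : state) (i c : nat) : int :=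
  let s : int := if q i then -1 else 1 in
  let L := (0 < i)%N && q i.-1 in
  let R := q i.+1 in
  if (c < p)%N then
    (if (i == c.+1)%N && L then s else 0) + (if (i == c)%N && (L && R) then s else 0)
  else if (i == c - p + 1)%N && (L && R) then - s else 0.

Fixpoint cocycle p k (q : state) (u : seq 'I_k) (c : nat) : int :=
  if u is a :: u' then weight p q a c + cocycle p (toggle q a) u' c else 0.

Lemma run_cat k q (u v : seq 'I_k) : run q (u ++ v) = run (run q u) v.
Proof. exact: foldl_cat. Qed.

Lemma cocycle_cat p k q (u v : seq 'I_k) c :
  cocycle p q (u ++ v) c = cocycle p q u c + cocycle p (run q u) v c.
Proof. by elim: u q => [|a u IH] q /=; rewrite ?add0r // IH addrA. Qed.

Lemma toggleK q i : toggle (toggle q i) i = q.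
Proof. by apply: functional_extensionality => j; rewrite /toggle -addbA addbb addbF. Qed.

Lemma toggleC q i j : toggle (toggle q i) j = toggle (toggle q j) i.
Proof. by apply: functional_extensionality => x; rewrite /toggle -!addbA (addbC (x == i)%N). Qed.

Lemma weight_toggle_self p q i c : weight p (toggle q i) i c = - weight p q i c.
Proof.
rewrite /weight /toggle eqxx (_ : (i.+1 == i)%N = false) ?addbF; last by lia.
have -> : (0 < i)%N && (q i.-1 (+) (i.-1 == i)%N) = (0 < i)%N && q i.-1.
  by case: i => [|i] //=; rewrite (_ : (i == i.+1)%N = false) ?addbF //; lia.
have -> : (if q i (+) true then -1 else 1 : int) = - (if q i then -1 else 1) by case: (q i).
case: (c < p)%N => /=;
  [case: [&& i == c.+1, _ & _]; case: [&& i == c, _ & _] | case: [&& _, _ & _]];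
  by rewrite ?oppr0 ?opprD ?add0r ?addr0.
Qed.

Lemma weight_toggle_far p q i j c : far_nat i j ->
  weight p (toggle q j) i c = weight p q i c.
Proof.
rewrite /far_nat /weight /toggle => far_ij.
have -> : (i == j)%N = false by lia.
have -> : (i.+1 == j)%N = false by lia.
rewrite !addbF; case: i far_ij => [|i] //= far_ij.
by rewrite (_ : (i == j)%N = false) ?addbF //; lia.
Qed.

Lemma cocycle_tw_eq p n (u v : tw_word n) q c :
  tw_eq u v -> cocycle p q u c = cocycle p q v c.
Proof.
move=> uv; elim: uv q => {u v} [//|u v _ IH|u v w _ IH1 _ IH2|u v i|u v i j far_ij] q.
- by rewrite IH.
- by rewrite IH1 IH2.
- by rewrite !cocycle_cat /= weight_toggle_self toggleK addr0 addrN add0r.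
- have far_ji : far_nat j i by rewrite /far_nat orbC.
  rewrite !cocycle_cat /= toggleC (weight_toggle_far _ _ _ far_ij).
  by rewrite (weight_toggle_far _ _ _ far_ji) !addr0 (addrC (weight _ _ i _)).
Qed.

Definition count_letter k (j : nat) (u : seq 'I_k) :=
  count (fun a : 'I_k => nat_of_ord a == j) u.

Definition even_word k (u : seq 'I_k) := forall j, ~~ odd (count_letter j u).

Lemma run_count_letter k q (u : seq 'I_k) j :
  run q u j = q j (+) odd (count_letter j u).
Proof.
elim: u q => [|a u IH] q /=; first by rewrite addbF.
by rewrite IH /toggle oddD -addbA eq_sym; case: (a == j :> nat).
Qed.

Lemma run_even k (u : seq 'I_k) : even_word u -> run state0 u = state0.
Proof.
move=> u_even; apply: functional_extensionality => j.
by rewrite run_count_letter /state0 (negbTE (u_even j)).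
Qed.

Lemma even_rev k (u : seq 'I_k) : even_word u -> even_word (rev u).
Proof. by move=> u_even j; rewrite /count_letter count_rev; apply: u_even. Qed.

Lemma odd_count_letter_tw_eq n (u v : tw_word n) j :
  tw_eq u v -> odd (count_letter j u) = odd (count_letter j v).
Proof.
elim=> {u v} [// | u v _ -> // | u v w _ -> _ -> // | u v i | u v i i' _];
  rewrite /count_letter !count_cat /= !oddD; move: (odd (count _ u)) (odd (count _ v)).
- by case: (odd (i == j :> nat)) => [] [] [].
- by case: (odd (i == j :> nat)); case: (odd (i' == j :> nat)) => [] [] [].
Qed.

Lemma derived_even_word n (H : tw_word n -> Prop) u : tw_derived H u -> even_word u.
Proof.
elim=> {u} [a b _ _ j | j // | u v _ u_even _ v_even j | u _ u_even | u v _ u_even uv j].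
- rewrite /tw_commutator /tw_inv /count_letter !count_cat !count_rev !oddD.
  by case: (odd _); case: (odd _).
- by rewrite /count_letter count_cat oddD (negbTE (u_even j)) (negbTE (v_even j)).
- exact: even_rev.
- by rewrite -(odd_count_letter_tw_eq _ uv).
Qed.

Definition tw_coord p k (u : seq 'I_k) (c : nat) : int := cocycle p state0 u c.

Lemma tw_coord_cat p k (u v : seq 'I_k) c :
  even_word u -> tw_coord p (u ++ v) c = tw_coord p u c + tw_coord p v c.
Proof. by move=> u_even; rewrite /tw_coord cocycle_cat run_even. Qed.

Lemma tw_coord_tw_eq p n (u v : tw_word n) c :
  tw_eq u v -> tw_coord p u c = tw_coord p v c.
Proof. exact: cocycle_tw_eq. Qed.

Lemma tw_coord_rev p n (u : tw_word n) c :
  even_word u -> tw_coord p (rev u) c = - tw_coord p u c.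
Proof.
move=> u_even; apply/eqP; rewrite -addr_eq0 -tw_coord_cat; last exact: even_rev.
by rewrite (tw_coord_tw_eq _ _ (tw_revcat u)).
Qed.

Lemma tw_coord_TW'' p n (u : tw_word n) c : TW'' u -> tw_coord p u c = 0.
Proof.
elim=> {u} [a b a_TW' b_TW' | // | u v u_TW'' IHu _ IHv | u u_TW'' IH | u v _ IH uv].
- have [a_even b_even] := (derived_even_word a_TW', derived_even_word b_TW').
  have [ra_even rb_even] := (even_rev a_even, even_rev b_even).
  by rewrite /tw_commutator /tw_inv !tw_coord_cat ?tw_coord_rev //; ring.
- by rewrite tw_coord_cat ?IHu ?IHv ?addr0 //; apply: derived_even_word u_TW''.
- by rewrite /tw_inv tw_coord_rev ?IH ?oppr0 //; apply: derived_even_word u_TW''.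
- by rewrite -(tw_coord_tw_eq _ _ uv).
Qed.

Local Close Scope ring_scope.

(** * Deciding relations by free cancellation *)

Definition letter p (j : nat) : 'I_p.+1 := inord j.

Lemma letterK p j : j <= p -> nat_of_ord (letter p j) = j.
Proof. exact: inordK. Qed.

(* [cancel_letter x l] deletes the first [x] of [l] when all letters before it
   are far from [x], so [reduce] is a sound but incomplete test for [u = 1]. *)
Fixpoint cancel_letter (x : nat) (l : seq nat) : option (seq nat) :=
  if l is y :: l' then
    if y == x then Some l'
    else if far_nat x y then omap (cons y) (cancel_letter x l') else None
  else None.

Fixpoint reduce_step (u : seq nat) : option (seq nat) :=
  if u is x :: u' then
    if cancel_letter x u' is Some r then Some r else omap (cons x) (reduce_step u')
  else None.

Fixpoint reduce (fuel : nat) (u : seq nat) : seq nat :=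
  if fuel is fuel'.+1 then
    if reduce_step u is Some r then reduce fuel' r else u
  else u.

Section Reduction.
Variables p base bound : nat.
Hypothesis base_bound : base + bound <= p.

Let shift (d : nat) : 'I_p.+1 := letter p (base + d).
Let bounded (u : seq nat) := all (fun d => d <= bound) u.

Lemma far_shift a b : a <= bound -> b <= bound -> far_nat a b -> far (shift a) (shift b).
Proof. by move=> ha hb; rewrite /far /far_nat /shift !letterK; lia. Qed.

Lemma cancel_letter_sound x l r : bounded (x :: l) -> cancel_letter x l = Some r ->
  tw_eq (n := p.+2) (map shift (x :: l)) (map shift r) /\ bounded r.
Proof.
elim: l r => [|y l IH] r //= /and3P [hx hy hl].
case: eqP => [-> [<-] | _]; first by split; [exact: (tw_sq [::]) |].
case: ifP => // far_xy; case e: (cancel_letter x l) => [r'|] // [<-].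
have [xl_r' r'_bounded] := IH r' (introT andP (conj hx hl)) e.
split; last by rewrite /= hy.
apply: (@tw_trans p.+2 _ (shift y :: shift x :: map shift l)).
  exact: (tw_comm (n := p.+2) [::] _ (far_shift hx hy far_xy)).
exact: (tw_congrL (n := p.+2) [:: shift y] xl_r').
Qed.

Lemma reduce_step_sound u r : bounded u -> reduce_step u = Some r ->
  tw_eq (n := p.+2) (map shift u) (map shift r) /\ bounded r.
Proof.
elim: u r => [|x u IH] r //= /andP [hx hu].
case e: (cancel_letter x u) => [r'|].
  by move=> [<-]; apply: cancel_letter_sound e; rewrite /= hx.
case e2: (reduce_step u) => [r'|] // [<-].
have [u_r' r'_bounded] := IH r' hu e2.
by split; [exact: (tw_congrL (n := p.+2) [:: shift x] u_r') | rewrite /= hx].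
Qed.

Lemma reduce_sound fuel u : bounded u ->
  tw_eq (n := p.+2) (map shift u) (map shift (reduce fuel u)).
Proof.
elim: fuel u => [|fuel IH] u u_bounded /=; first exact: tw_refl.
case e: (reduce_step u) => [r|]; last exact: tw_refl.
have [u_r r_bounded] := reduce_step_sound u_bounded e.
exact: tw_trans u_r (IH r r_bounded).
Qed.

Lemma tw_eq_by_reduce (u v : seq nat) :
  let w := u ++ rev v in bounded w -> reduce (size w) w = [::] ->
  tw_eq (n := p.+2) (map shift u) (map shift v).
Proof.
move=> w w_bounded w_reduced.
have := reduce_sound (size w) w_bounded; rewrite w_reduced /= map_cat map_rev => uv'.
apply: (@tw_trans p.+2 _ (map shift u ++ rev (map shift v) ++ map shift v)).
  have := tw_congrL (n := p.+2) (map shift u)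
    (tw_sym (tw_revcat (n := p.+2) (map shift v))).
  by rewrite cats0.
by rewrite catA; apply: tw_congrR uv'.
Qed.

End Reduction.

(** * The generators x_c and y_k *)

Definition x_word p k : seq 'I_p.+1 :=
  [:: letter p k; letter p k.+1; letter p k; letter p k.+1].
Definition y_word p k : seq 'I_p.+1 :=
  [:: letter p k.-1; letter p k; letter p k.+1; letter p k; letter p k.+1; letter p k.-1].
Definition gen_word p c : seq 'I_p.+1 :=
  if c < p then x_word p c else y_word p (c - p + 1).

Lemma gen_word_x p c : c < p -> gen_word p c = x_word p c.
Proof. by rewrite /gen_word => ->. Qed.

Lemma gen_word_y p k : 0 < k < p -> gen_word p (k + p - 1) = y_word p k.
Proof.
move=> /andP [k_gt0 k_lt]; rewrite /gen_word.
have -> : (k + p - 1 < p) = false by lia.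
by have -> : k + p - 1 - p + 1 = k by lia.
Qed.

Lemma y_word_commutator p k :
  tw_eq (n := p.+2)
    (tw_commutator (n := p.+2) [:: letter p k.-1; letter p k; letter p k.-1]
                   [:: letter p k.-1; letter p k.+1; letter p k.-1])
    (y_word p k).
Proof.
rewrite /tw_commutator /tw_inv /=.
set a := letter p k.-1; set b := letter p k; set d := letter p k.+1.
apply: tw_trans (tw_sq (n := p.+2) [:: a; b] [:: d; a; a; b; a; a; d; a] a) _.
apply: tw_trans (tw_sq (n := p.+2) [:: a; b; d] [:: b; a; a; d; a] a) _.
exact: (tw_sq (n := p.+2) [:: a; b; d; b] [:: d; a] a).
Qed.

Lemma gen_word_TW' p c : TW' (n := p.+2) (gen_word p c).
Proof.
rewrite /gen_word; case: ifP => _.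
  exact: (@der_gen p.+2 _ [:: letter p c] [:: letter p c.+1] I I).
exact: der_eq (@der_gen p.+2 _ _ _ I I) (y_word_commutator p _).
Qed.

Local Open Scope ring_scope.

Ltac case_nat_tests := repeat match goal with
  | |- context [(?a == ?b)%N] => case: (@eqP nat a b) => ?; try subst; try (exfalso; lia)
  | |- context [(?a < ?b)%N] => case: (ltnP a b) => ?; try (exfalso; lia)
  end.

Lemma tw_coord_x_word p k c : (k < p)%N -> tw_coord p (x_word p k) c = (k == c)%:Z.
Proof.
move=> k_lt; rewrite /tw_coord /x_word /= /weight /toggle /state0 !letterK; try lia.
by case_nat_tests; simpl; lia.
Qed.

Lemma tw_coord_y_word p k c : (0 < k < p)%N ->
  tw_coord p (y_word p k) c = ((k + p - 1)%N == c)%:Z.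
Proof.
move=> k_bounds; rewrite /tw_coord /y_word /= /weight /toggle /state0 !letterK; try lia.
by case: (ltnP c p) => c_p /=; case_nat_tests; simpl; lia.
Qed.

Lemma tw_coord_gen_word p c' c :
  (c' < 2 * p - 1)%N -> tw_coord p (gen_word p c') c = (c' == c)%:Z.
Proof.
move=> c'_lt; case: (ltnP c' p) => c'_p; first by rewrite gen_word_x ?tw_coord_x_word.
have k_bounds : (0 < c' - p + 1 < p)%N by lia.
by rewrite -(_ : (c' - p + 1 + p - 1 = c')%N) ?gen_word_y ?tw_coord_y_word //; lia.
Qed.

Local Close Scope ring_scope.

Definition sgen p (e : bool * nat) : seq 'I_p.+1 :=
  if e.1 then rev (gen_word p e.2) else gen_word p e.2.
Definition expand p (s : seq (bool * nat)) : seq 'I_p.+1 := flatten (map (sgen p) s).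
Definition valid_sgens p (s : seq (bool * nat)) := all (fun e => e.2 < 2 * p - 1) s.

Lemma expand_cat p s1 s2 : expand p (s1 ++ s2) = expand p s1 ++ expand p s2.
Proof. by rewrite /expand map_cat flatten_cat. Qed.

Lemma sgen_TW' p e : TW' (n := p.+2) (sgen p e).
Proof. by rewrite /sgen; case: ifP => _; [apply: der_inv | ]; apply: gen_word_TW'. Qed.

Lemma expand_TW' p s : TW' (n := p.+2) (expand p s).
Proof. by elim: s => [|e s IH]; [apply: der_one | apply: der_mul (sgen_TW' p e) IH]. Qed.

Local Open Scope ring_scope.

Definition sgn (b : bool) : int := if b then -1 else 1.

Fixpoint exponent_sum (s : seq (bool * nat)) (c : nat) : int :=
  if s is e :: s' then (if (e.2 == c)%N then sgn e.1 else 0) + exponent_sum s' c else 0.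

Lemma exponent_sum_cat s1 s2 c :
  exponent_sum (s1 ++ s2) c = exponent_sum s1 c + exponent_sum s2 c.
Proof. by elim: s1 => [|e s IH] /=; rewrite ?add0r // IH addrA. Qed.

Lemma exponent_sum_sign s b c : (~~ b, c) \notin s -> 0 <= sgn b * exponent_sum s c.
Proof.
elim: s => [|[b' c'] s IH] /=; first by rewrite mulr0.
rewrite in_cons negb_or => /andP [ne /IH {}IH].
case: (c' =P c) => [c'c | _]; last by rewrite add0r.
by move: ne IH; rewrite c'c /sgn xpair_eqE eqxx andbT; case: b; case: b' => //= _; lia.
Qed.

Lemma tw_coord_expand p s c :
  valid_sgens p s -> tw_coord p (expand p s) c = exponent_sum s c.
Proof.
elim: s => [|[b c'] s IH] //= /andP [c'_lt s_valid].
have gen_even := derived_even_word (gen_word_TW' p c').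
rewrite tw_coord_cat; last exact: derived_even_word (sgen_TW' p (b, c')).
rewrite IH // /sgen /=; congr (_ + _); case: b => /=.
  by rewrite (@tw_coord_rev p p.+2) // tw_coord_gen_word //; case: (c' == c)%N.
by rewrite tw_coord_gen_word //; case: (c' == c)%N.
Qed.

(* Pair the first generator [g] with an occurrence of its inverse:
   [g E1 g^-1 E2] is the commutator of [g^-1] and [E1^-1] followed by [E1 E2]. *)
Lemma expand_TW'' p s : (forall c, exponent_sum s c = 0) -> TW'' (n := p.+2) (expand p s).
Proof.
have [k] := ubnP (size s); elim: k s => // k IH [|[b c] s] /= size_s s_balanced.
  exact: der_one.
have inv_in : (~~ b, c) \in s.
  apply/negPn/negP => /exponent_sum_sign; move: (s_balanced c); rewrite /= eqxx /sgn.
  by case: (b) => /= ? ?; lia.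
case/splitPr: inv_in size_s s_balanced => s1 s2 size_s s_balanced.
set g := sgen p (b, c); set E1 := expand p s1; set E2 := expand p s2.
have g_inv : sgen p (~~ b, c) = rev g by rewrite /g /sgen; case: (b) => /=; rewrite ?revK.
have -> : expand p ((b, c) :: s1 ++ (~~ b, c) :: s2) = g ++ E1 ++ rev g ++ E2.
  by rewrite /E1 /E2 /expand /= map_cat flatten_cat /= -/(sgen p (~~ b, c)) g_inv.
have rest_TW'' : TW'' (n := p.+2) (expand p (s1 ++ s2)).
  apply: IH => [|x]; first by move: size_s; rewrite !size_cat /=; lia.
  have := s_balanced x; rewrite /= !exponent_sum_cat /=.
  by case: (c == x)%N; rewrite ?add0r //; case: (b) => /=; lia.
have comm_TW'' : TW'' (n := p.+2) (tw_commutator (n := p.+2) (rev g) (rev E1)).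
  by apply: der_gen; apply: der_inv; [apply: sgen_TW' | apply: expand_TW'].
apply: der_eq (der_mul comm_TW'' rest_TW'') _.
rewrite /tw_commutator /tw_inv !revK expand_cat -/E1 -/E2 -!catA.
have := tw_congr (n := p.+2) (g ++ E1 ++ rev g) E2 (tw_revcat (n := p.+2) E1).
by rewrite -!catA.
Qed.

Local Close Scope ring_scope.

(** * Conjugating the generators by a letter *)

Ltac tw_eq_reduce base bound u v :=
  have := @tw_eq_by_reduce _ base bound _ u v erefl erefl;
  rewrite /= ?addn0 ?addn1 ?addn2 ?addn3; apply; lia.

(* [conj_x_word_j] and [conj_y_word_j] conjugate [x_k], resp. [y_(k+1)], by
   the letter [k + j]; [conj_y_word_pred] conjugates [y_(k+2)] by [k]. *)
Lemma conj_x_word_0 p k : k + 1 <= p ->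
  tw_eq (n := p.+2) ([:: letter p k] ++ x_word p k ++ [:: letter p k]) (rev (x_word p k)).
Proof. by move=> ?; tw_eq_reduce k 1 [:: 0; 0; 1; 0; 1; 0] [:: 1; 0; 1; 0]. Qed.

Lemma conj_x_word_1 p k : k + 1 <= p ->
  tw_eq (n := p.+2) ([:: letter p k.+1] ++ x_word p k ++ [:: letter p k.+1]) (rev (x_word p k)).
Proof. by move=> ?; tw_eq_reduce k 1 [:: 1; 0; 1; 0; 1; 1] [:: 1; 0; 1; 0]. Qed.

Lemma conj_x_word_2 p k : k + 2 <= p ->
  tw_eq (n := p.+2) ([:: letter p k.+2] ++ x_word p k ++ [:: letter p k.+2])
    (rev (y_word p k.+1) ++ x_word p k ++ x_word p k.+1).
Proof.
by move=> ?; tw_eq_reduce k 2 [:: 2; 0; 1; 0; 1; 2]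
  [:: 0; 2; 1; 2; 1; 0; 0; 1; 0; 1; 1; 2; 1; 2].
Qed.

Lemma conj_y_word_pred p k : k + 3 <= p ->
  tw_eq (n := p.+2) ([:: letter p k] ++ y_word p k.+2 ++ [:: letter p k])
    (x_word p k ++ y_word p k.+2 ++ rev (x_word p k)).
Proof.
by move=> ?; tw_eq_reduce k 3 [:: 0; 1; 2; 3; 2; 3; 1; 0]
  [:: 0; 1; 0; 1; 1; 2; 3; 2; 3; 1; 1; 0; 1; 0].
Qed.

Lemma conj_y_word_0 p k : k + 2 <= p ->
  tw_eq (n := p.+2) ([:: letter p k] ++ y_word p k.+1 ++ [:: letter p k]) (x_word p k.+1).
Proof. by move=> ?; tw_eq_reduce k 2 [:: 0; 0; 1; 2; 1; 2; 0; 0] [:: 1; 2; 1; 2]. Qed.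

Lemma conj_y_word_1 p k : k + 2 <= p ->
  tw_eq (n := p.+2) ([:: letter p k.+1] ++ y_word p k.+1 ++ [:: letter p k.+1])
    (rev (x_word p k) ++ rev (y_word p k.+1) ++ x_word p k).
Proof.
by move=> ?; tw_eq_reduce k 2 [:: 1; 0; 1; 2; 1; 2; 0; 1]
  [:: 1; 0; 1; 0; 0; 2; 1; 2; 1; 0; 0; 1; 0; 1].
Qed.

Lemma conj_y_word_2 p k : k + 2 <= p ->
  tw_eq (n := p.+2) ([:: letter p k.+2] ++ y_word p k.+1 ++ [:: letter p k.+2])
    (rev (y_word p k.+1)).
Proof. by move=> ?; tw_eq_reduce k 2 [:: 2; 0; 1; 2; 1; 2; 0; 2] [:: 0; 2; 1; 2; 1; 0]. Qed.

Lemma conj_y_word_3 p k : k + 3 <= p ->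
  tw_eq (n := p.+2) ([:: letter p k.+3] ++ y_word p k.+1 ++ [:: letter p k.+3])
    (x_word p k ++ rev (y_word p k.+2) ++ rev (x_word p k) ++ y_word p k.+1 ++ x_word p k.+2).
Proof.
by move=> ?; tw_eq_reduce k 3 [:: 3; 0; 1; 2; 1; 2; 0; 3]
  [:: 0; 1; 0; 1; 1; 3; 2; 3; 2; 1; 1; 0; 1; 0; 0; 1; 2; 1; 2; 0; 2; 3; 2; 3].
Qed.

Definition spanned p (u : seq 'I_p.+1) :=
  exists2 s, valid_sgens p s & tw_eq (n := p.+2) u (expand p s).

Ltac valid_sgens_tac := rewrite /valid_sgens /=; repeat (apply/andP; split); lia.

Lemma spanned_conj_x_word p (a : 'I_p.+1) c : c < p ->
  spanned ([:: a] ++ x_word p c ++ [:: a]).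
Proof.
move=> c_lt; rewrite -[a]inord_val -/(letter p _).
have : a <= p by rewrite -ltnS.
move: (nat_of_ord a) => j j_le.
have [far_jc | near_jc] := boolP ((j + 2 <= c) || (c + 3 <= j)).
  exists [:: (false, c)]; first by valid_sgens_tac.
  rewrite /expand /sgen /= cats0 gen_word_x //.
  have := tw_conj_far (n := p.+2) (w := [:: letter p j]) (z := x_word p c); apply.
  by rewrite /= /far !letterK; lia.
have [jc|[jc|[jc|jc]]] : j.+1 = c \/ j = c \/ j = c.+1 \/ j = c.+2 by lia.
- rewrite -jc; exists [:: (false, j.+1 + p - 1)]; first by valid_sgens_tac.
  by rewrite /expand /sgen /= cats0 gen_word_y; [apply: tw_refl | lia].
- rewrite jc; exists [:: (true, c)]; first by valid_sgens_tac.
  by rewrite /expand /sgen /= cats0 gen_word_x //; apply: conj_x_word_0; lia.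
- rewrite jc; exists [:: (true, c)]; first by valid_sgens_tac.
  by rewrite /expand /sgen /= cats0 gen_word_x //; apply: conj_x_word_1; lia.
- rewrite jc; exists [:: (true, c.+1 + p - 1); (false, c); (false, c.+1)].
    by valid_sgens_tac.
  rewrite /expand /sgen /= cats0 gen_word_y ?gen_word_x; try lia.
  by apply: conj_x_word_2; lia.
Qed.

Lemma spanned_conj_y_word p (a : 'I_p.+1) k : 0 < k < p ->
  spanned ([:: a] ++ y_word p k ++ [:: a]).
Proof.
case: k => // k /andP [_ k_lt]; rewrite -[a]inord_val -/(letter p _).
have : a <= p by rewrite -ltnS.
move: (nat_of_ord a) => j j_le.
have [far_jk | near_jk] := boolP ((j + 2 <= k) || (k + 4 <= j)).
  exists [:: (false, k.+1 + p - 1)]; first by valid_sgens_tac.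
  rewrite /expand /sgen /= cats0 gen_word_y; last lia.
  have := tw_conj_far (n := p.+2) (w := [:: letter p j]) (z := y_word p k.+1); apply.
  by rewrite /= /far !letterK; lia.
have [jk|[jk|[jk|[jk|jk]]]] : j.+1 = k \/ j = k \/ j = k.+1 \/ j = k.+2 \/ j = k.+3 by lia.
- rewrite -jk; exists [:: (false, j); (false, j.+2 + p - 1); (true, j)].
    by valid_sgens_tac.
  rewrite /expand /sgen /= cats0 gen_word_y ?gen_word_x; try lia.
  by apply: conj_y_word_pred; lia.
- rewrite jk; exists [:: (false, k.+1)]; first by valid_sgens_tac.
  rewrite /expand /sgen /= cats0 gen_word_x; last lia.
  by apply: conj_y_word_0; lia.
- rewrite jk; exists [:: (true, k); (true, k.+1 + p - 1); (false, k)].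
    by valid_sgens_tac.
  rewrite /expand /sgen /= cats0 gen_word_y ?gen_word_x; try lia.
  by apply: conj_y_word_1; lia.
- rewrite jk; exists [:: (true, k.+1 + p - 1)]; first by valid_sgens_tac.
  rewrite /expand /sgen /= cats0 gen_word_y; last lia.
  by apply: conj_y_word_2; lia.
- rewrite jk; exists [:: (false, k); (true, k.+2 + p - 1); (true, k);
                        (false, k.+1 + p - 1); (false, k.+2)]; first by valid_sgens_tac.
  rewrite /expand /sgen /= cats0 !gen_word_y ?gen_word_x; try lia.
  by apply: conj_y_word_3; lia.
Qed.

Lemma spanned_conj_gen_word p (a : 'I_p.+1) c : c < 2 * p - 1 ->
  spanned ([:: a] ++ gen_word p c ++ [:: a]).
Proof.
move=> c_lt; case: (ltnP c p) => c_p.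
  by rewrite gen_word_x //; apply: spanned_conj_x_word.
by rewrite /gen_word ltnNge c_p /=; apply: spanned_conj_y_word; lia.
Qed.

Lemma spanned_nil p : spanned (p := p) [::].
Proof. by exists [::]; last exact: tw_refl. Qed.

Lemma spanned_cat p (u v : seq 'I_p.+1) : spanned u -> spanned v -> spanned (u ++ v).
Proof.
move=> [s1 s1_valid u_s1] [s2 s2_valid v_s2]; exists (s1 ++ s2).
  by move: s1_valid s2_valid; rewrite /valid_sgens all_cat => -> ->.
by rewrite expand_cat; apply: tw_cat.
Qed.

Lemma spanned_tw_eq p (u v : seq 'I_p.+1) : tw_eq (n := p.+2) u v -> spanned u -> spanned v.
Proof. by move=> uv [s s_valid u_s]; exists s => //; apply: tw_trans (tw_sym uv) u_s. Qed.

Definition inv_sgens (s : seq (bool * nat)) := rev (map (fun e => (~~ e.1, e.2)) s).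

Lemma expand_inv_sgens p s : expand p (inv_sgens s) = rev (expand p s).
Proof.
elim: s => [|[b c] s IH] //=.
rewrite /inv_sgens map_cons rev_cons -cats1 expand_cat -/(inv_sgens s) IH.
by rewrite /expand /= cats0 rev_cat /sgen /=; case: b; rewrite ?revK.
Qed.

Lemma spanned_rev p (u : seq 'I_p.+1) : spanned u -> spanned (rev u).
Proof.
move=> [s s_valid u_s]; exists (inv_sgens s).
  by rewrite /valid_sgens /inv_sgens all_rev all_map.
by rewrite expand_inv_sgens; apply: (tw_rev (n := p.+2)).
Qed.

Lemma spanned_conj_expand p (a : 'I_p.+1) s : valid_sgens p s ->
  spanned ([:: a] ++ expand p s ++ [:: a]).
Proof.
elim: s => [_ | [b c] s IH /andP [c_lt s_valid]] /=.
  by apply: spanned_tw_eq (spanned_nil p); apply: tw_sym (tw_sq (n := p.+2) [::] [::] a).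
have conj_sgen : spanned ([:: a] ++ sgen p (b, c) ++ [:: a]).
  rewrite /sgen /=; case: (b); last exact: spanned_conj_gen_word.
  by have := spanned_rev (spanned_conj_gen_word a c_lt); rewrite !rev_cat.
apply: spanned_tw_eq (spanned_cat conj_sgen (IH s_valid)).
have := tw_congr (n := p.+2) ([:: a] ++ sgen p (b, c)) (expand p s ++ [:: a])
  (tw_sq (n := p.+2) [::] [::] a).
by rewrite /= -!catA.
Qed.

Lemma spanned_conj_letter p (a : 'I_p.+1) u : spanned u -> spanned ([:: a] ++ u ++ [:: a]).
Proof.
move=> [s s_valid u_s]; apply: spanned_tw_eq (spanned_conj_expand a s_valid).
exact: (tw_congr (n := p.+2) [:: a] [:: a] (tw_sym u_s)).
Qed.

Lemma spanned_conj p (w u : seq 'I_p.+1) : spanned u -> spanned (w ++ u ++ rev w).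
Proof.
elim: w => [|a w IH] /= u_spanned; first by rewrite cats0.
by have := spanned_conj_letter a (IH u_spanned); rewrite rev_cons -cats1 /= -!catA.
Qed.

(** * Reidemeister-Schreier *)

Definition coset_rep p (q : state) : seq 'I_p.+1 :=
  map (letter p) (filter q (iota 0 p.+1)).

Lemma coset_rep_state0 p : coset_rep p state0 = [::].
Proof. by rewrite /coset_rep (_ : filter state0 _ = [::]) // -(filter_pred0 (iota 0 p.+1)). Qed.

Lemma coset_rep_split p q i : i <= p ->
  coset_rep p q = map (letter p) (filter q (iota 0 i)) ++
    (if q i then [:: letter p i] else [::]) ++ map (letter p) (filter q (iota i.+1 (p - i))).
Proof.
move=> i_le; rewrite /coset_rep (_ : iota 0 p.+1 = iota 0 (i + (p - i).+1)).
  by rewrite iotaD filter_cat map_cat add0n /=; case: (q i).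
by congr iota; lia.
Qed.

Lemma filter_toggle q a l : a \notin l -> filter (toggle q a) l = filter q l.
Proof.
move=> a_notin; apply: eq_in_filter => x x_in; rewrite /toggle.
by rewrite (_ : (x == a) = false) ?addbF //; apply: contraNF a_notin => /eqP <-.
Qed.

Lemma tw_conj_upper p q i : i <= p ->
  let B := map (letter p) (filter q (iota i.+1 (p - i))) in
  tw_eq (n := p.+2) (B ++ [:: letter p i] ++ rev B)
    (if (i < p) && q i.+1 then [:: letter p i.+1; letter p i; letter p i.+1]
     else [:: letter p i]).
Proof.
move=> i_le /=; case: (ltnP i p) => i_p /=.
  2: by rewrite (_ : p - i = 0); [apply: tw_refl | lia].
rewrite (_ : p - i = (p - i.+1).+1) /=; last lia.
set B := map (letter p) (filter q (iota i.+2 (p - i.+1))).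
have far_B : all (fun a => all (fun b => far b a) B) [:: letter p i].
  rewrite /= andbT; apply/allP => y /mapP [x].
  by rewrite mem_filter mem_iota => /andP [_ x_in] ->; rewrite /far !letterK; lia.
case: (q i.+1) => /=; last exact: (tw_conj_far (n := p.+2) far_B).
rewrite rev_cons -cats1.
have := tw_congr (n := p.+2) [:: letter p i.+1] [:: letter p i.+1]
  (tw_conj_far (n := p.+2) far_B).
by rewrite /= -!catA.
Qed.

(* These are the Schreier generators of [TW'] for the transversal of increasing words. *)
Lemma spanned_schreier p q (a : 'I_p.+1) :
  spanned (coset_rep p q ++ a :: rev (coset_rep p (toggle q a))).
Proof.
rewrite -[a]inord_val -/(letter p _).
have : a <= p by rewrite -ltnS.
move: (nat_of_ord a) => i i_le.
rewrite (letterK i_le) (coset_rep_split q i_le) (coset_rep_split (toggle q i) i_le).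
rewrite !filter_toggle ?mem_iota; try lia.
rewrite /toggle eqxx addbT -/(toggle q i).
set A := map (letter p) (filter q (iota 0 i)).
have /= B_conj := tw_conj_upper q i_le.
set B := map (letter p) (filter q (iota i.+1 (p - i))) in B_conj *.
set C := (if _ then _ else _) in B_conj.
have iC : spanned ([:: letter p i] ++ C).
  rewrite /C; case: ifP => [/andP [i_p _] | _].
    exists [:: (false, i)]; first by rewrite /valid_sgens /= andbT; lia.
    by rewrite /expand /sgen /= cats0 gen_word_x //; apply: tw_refl.
  by apply: spanned_tw_eq (spanned_nil p); apply: tw_sym (tw_sq (n := p.+2) [::] [::] _).
have Ci : spanned (C ++ [:: letter p i]).
  by have := spanned_rev iC; rewrite rev_cat /C; case: ifP.
case: (q i) => /=.
- apply: (spanned_tw_eq (u := A ++ ([:: letter p i] ++ C) ++ rev A)); last exact: spanned_conj.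
  have := tw_congrL (n := p.+2) [:: letter p i] (tw_sym B_conj).
  move=> /(tw_congr (n := p.+2) A (rev A)) /tw_trans; apply.
  by apply: tw_eq_of_eq; rewrite rev_cat /= -!catA.
- apply: (spanned_tw_eq (u := A ++ (C ++ [:: letter p i]) ++ rev A)); last exact: spanned_conj.
  have := tw_congrR (n := p.+2) [:: letter p i] (tw_sym B_conj).
  move=> /(tw_congr (n := p.+2) A (rev A)) /tw_trans; apply.
  by apply: tw_eq_of_eq; rewrite !rev_cat /= rev_cons -cats1 -!catA.
Qed.

Lemma spanned_cat_rev_coset_rep p (u : seq 'I_p.+1) :
  spanned (u ++ rev (coset_rep p (run state0 u))).
Proof.
elim/last_ind: u => [|u a IH]; first by rewrite coset_rep_state0; apply: spanned_nil.
rewrite -cats1 run_cat /=; set q := run state0 u.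
apply: (spanned_tw_eq _ (spanned_cat IH (spanned_schreier q a))).
have := tw_congr (n := p.+2) u (a :: rev (coset_rep p (toggle q a)))
  (tw_revcat (n := p.+2) (coset_rep p q)).
by rewrite /= -!catA.
Qed.

Lemma TW'_spanned p (u : seq 'I_p.+1) : TW' (n := p.+2) u -> spanned u.
Proof.
move=> /derived_even_word /run_even u_run.
by have := spanned_cat_rev_coset_rep u; rewrite u_run coset_rep_state0 cats0.
Qed.

Local Open Scope ring_scope.

Lemma exponent_sum_out p s c :
  valid_sgens p s -> (2 * p - 1 <= c)%N -> exponent_sum s c = 0.
Proof.
elim: s => [|[b c'] s IH] //= /andP [c'_lt s_valid] c_ge.
by rewrite IH // (_ : (c' == c) = false) ?addr0 //; apply/eqP; lia.
Qed.

Lemma TW''_of_tw_coord_eq0 p (u : seq 'I_p.+1) : TW' (n := p.+2) u ->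
  (forall c, (c < 2 * p - 1)%N -> tw_coord p u c = 0) -> TW'' (n := p.+2) u.
Proof.
move=> /TW'_spanned [s s_valid u_s] u_coord0.
apply: der_eq (tw_sym u_s); apply: expand_TW'' => c.
case: (ltnP c (2 * p - 1)) => [c_lt | c_ge]; last exact: exponent_sum_out s_valid c_ge.
by rewrite -(tw_coord_expand c s_valid) -(tw_coord_tw_eq _ _ u_s) u_coord0.
Qed.

Lemma exponent_sum_nseq k b c c' :
  exponent_sum (nseq k (b, c)) c' = if (c == c')%N then k%:Z * sgn b else 0.
Proof.
elim: k => [|k IH] /=; first by case: ifP; rewrite ?mul0r.
by rewrite IH; case: ifP => _; rewrite ?addr0 // intS mulrDl mul1r.
Qed.

Definition sgen_power (z : int) (c : nat) := nseq (absz z) (z < 0, c).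

Lemma exponent_sum_sgen_power z c c' :
  exponent_sum (sgen_power z c) c' = if (c == c')%N then z else 0.
Proof.
rewrite /sgen_power exponent_sum_nseq; case: ifP => // _.
by case: z => k /=; rewrite ?mulr1 // NegzE mulrN1.
Qed.

Lemma exponent_sum_flatten (z : nat -> int) l c : uniq l ->
  exponent_sum (flatten [seq sgen_power (z c') c' | c' <- l]) c = if c \in l then z c else 0.
Proof.
elim: l => [|c' l IH] //= /andP [c'_notin l_uniq].
rewrite exponent_sum_cat IH // exponent_sum_sgen_power in_cons eq_sym.
case: eqP => [-> | _] /=; last by rewrite add0r.
by rewrite (negbTE c'_notin) addr0.
Qed.

Lemma exists_sgens_exponent_sums p (x : 'rV[int]_(2 * p - 1)) :
  exists2 s, valid_sgens p s & forall c : 'I_(2 * p - 1), exponent_sum s c = x ord0 c.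
Proof.
pose z c : int := if insub c is Some c' then x ord0 c' else 0.
exists (flatten [seq sgen_power (z c) c | c <- iota 0 (2 * p - 1)]) => [|c].
  apply/allP => e /flattenP [l /mapP [c c_in ->]] /nseqP [-> _].
  by move: c_in; rewrite mem_iota.
by rewrite exponent_sum_flatten ?iota_uniq // mem_iota /= ltn_ord /z valK.
Qed.

Definition tw_coord_row p (u : tw_word p.+2) : 'rV[int]_(2 * p - 1) :=
  \row_(c < 2 * p - 1) tw_coord p u c.

Lemma TW_ab_iso_Zk_2p_1 p : (0 < p)%N -> TW_ab_iso_Zk p.+2 (2 * p - 1).
Proof.
move=> p_gt0; exists (@tw_coord_row p); split.
- by move=> u v _ uv; apply/rowP => c; rewrite !mxE; apply: tw_coord_tw_eq.
- move=> u v u_TW' _; apply/rowP => c; rewrite !mxE.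
  by apply: tw_coord_cat; apply: derived_even_word u_TW'.
- move=> x; have [s s_valid s_x] := exists_sgens_exponent_sums x.
  exists (expand p s); first exact: expand_TW'.
  by apply/rowP => c; rewrite !mxE tw_coord_expand.
- move=> u u_TW'; split => [u_0 | u_TW'' ].
    apply: TW''_of_tw_coord_eq0 u_TW' _ => c c_lt.
    have := congr1 (fun M : 'rV[int]_(2 * p - 1) => M ord0 (Ordinal c_lt)) u_0.
    by rewrite !mxE.
  by apply/rowP => c; rewrite !mxE; apply: tw_coord_TW''.
Qed.

Lemma TW'_not_perfect p : (0 < p)%N -> ~ TW'_perfect p.+2.
Proof.
move=> p_gt0 perfect.
have := tw_coord_TW'' p 0 (perfect _ (gen_word_TW' p 0)).
by rewrite tw_coord_gen_word //; lia.
Qed.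

Theorem corollary1p3 (m : nat) (hm : (1 <= m)%N) :
  TW_ab_iso_Zk (m + 2) (2 * m - 1) /\ ~ TW'_perfect (m + 2).
Proof. by rewrite addn2; split; [apply: TW_ab_iso_Zk_2p_1 | apply: TW'_not_perfect]. Qed.
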